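(* Let $d,r\ge1$. Every multilinear map $f:M_d^r\to M_d$ that is equivariant under unitaries and positive (i.e. $f(X_1,\dots,X_r)\ge0$ whenever $X_1,\dots,X_r\ge0$) is of the form $f(X_1,\dots,X_r)=\operatorname{tr}_{1\dots r}[\mathcal{B}(X_1\otimes\cdots\otimes X_r\otimes\mathbb{1})]$ for a block-positive operator $\mathcal{B}$ on $(\mathbb{C}^d)^{\otimes(r+1)}$ with $U^{\otimes(r+1)}\mathcal{B}(U^\dagger)^{\otimes(r+1)}=\mathcal{B}$ for all unitaries $U$. In particular, every optimal such map corresponds in this way to an optimal Werner state entanglement witness, i.e. an optimal entanglement witness $\mathcal{W}$ on $(\mathbb{C}^d)^{\otimes(r+1)}$ with $U^{\otimes(r+1)}\mathcal{W}(U^\dagger)^{\otimes(r+1)}=\mathcal{W}$ for all unitaries $U$.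
   Context: $M_d$ is the set of complex $d\times d$ matrices; $A\ge0$ means positive semidefinite. A map $f$ is equivariant under unitaries if $f(UX_1U^\dagger,\dots,UX_rU^\dagger)=Uf(X_1,\dots,X_r)U^\dagger$ for all $X_i\in M_d$ and unitary $U$. $\operatorname{tr}_{1\dots r}$ is the partial trace over the first $r$ tensor factors. $\mathcal{B}$ is block-positive if $\operatorname{tr}[\mathcal{B}\rho]\ge0$ for all separable states $\rho$ (convex combinations of product states $\rho_1\otimes\cdots\otimes\rho_{r+1}$, states being positive semidefinite trace-one matrices). An entanglement witness is a block-positive $\mathcal{W}$ with $\operatorname{tr}[\mathcal{W}\sigma]<0$ for some state $\sigma$; it is optimal if also $\operatorname{tr}[\mathcal{W}\tilde\rho]=0$ for some separable state $\tilde\rho$. A positive multilinear map $f$ is optimal if the smallest eigenvalue of $f(\tilde X_1,\dots,\tilde X_r)$ equals $0$ for some nonzero positive semidefinite $\tilde X_1,\dots,\tilde X_r$.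
   Formalization: The in-particular clause holds only for optimal maps f whose operator $\mathcal{B}$ is not positive semidefinite; for these, $\mathcal{B}$ itself is an optimal Werner state entanglement witness. Each condition added here is assumed in the paper as well or is needed for the statement above to hold. *)

From HB Require Import structures.
From mathcomp Require Import all_boot all_order all_algebra.
From mathcomp Require Import sesquilinear spectral.
From mathcomp Require Import reals.
From mathcomp Require Import complex.

Set Implicit Arguments.
Unset Strict Implicit.
Unset Printing Implicit Defensive.

Import Order.TTheory GRing.Theory Num.Theory.
Local Open Scope ring_scope.
Local Open Scope sesquilinear_scope.

Section QuantumDefs.

Variable R : realType.
Local Notation C := (R[i]).
Variable d : nat.

(* index set of the computational basis of (C^d)^{\otimes k} *)
Definition tidx (k : nat) := {ffun 'I_k -> 'I_d}.

(* operators on (C^d)^{\otimes k}, as matrices indexed by tidx k *)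
Definition op (k : nat) := tidx k -> tidx k -> C.

Definition opmul k (A B : op k) : op k :=
  fun s t => \sum_(u : tidx k) A s u * B u t.

Definition optr k (A : op k) : C := \sum_(s : tidx k) A s s.

Definition psd_op k (A : op k) : Prop :=
  (forall s t, A t s = (A s t)^*) /\
  (forall v : tidx k -> C,
      0 <= \sum_(s : tidx k) \sum_(t : tidx k) (v s)^* * A s t * v t).

Definition psd_mx (X : 'M[C]_d) : Prop :=
  (forall i j, X j i = (X i j)^*) /\
  (forall v : 'I_d -> C,
      0 <= \sum_(i < d) \sum_(j < d) (v i)^* * X i j * v j).

Definition tens k (Y : 'I_k -> 'M[C]_d) : op k :=
  fun s t => \prod_(i < k) Y i (s i) (t i).

Definition ext_one r (X : 'I_r -> 'M[C]_d) : 'I_r.+1 -> 'M[C]_d :=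
  fun i => if unlift ord_max i is Some j then X j else 1%:M.

(* partial trace over the first r tensor factors of (C^d)^{\otimes (r+1)} *)
Definition ptrace r (Z : op r.+1) : 'M[C]_d :=
  \matrix_(a < d, b < d)
    \sum_(s : tidx r.+1 | s ord_max == a)
       Z s [ffun i => if i == ord_max then b else s i].

Definition is_state k (rho : op k) : Prop := psd_op rho /\ optr rho = 1.

Definition is_state_mx (rho : 'M[C]_d) : Prop := psd_mx rho /\ \tr rho = 1.

Definition separable k (rho : op k) : Prop :=
  exists (n : nat) (p : 'I_n -> C) (rhos : 'I_n -> 'I_k -> 'M[C]_d),
    [/\ forall l, 0 <= p l,
        \sum_(l < n) p l = 1,
        forall l i, is_state_mx (rhos l i) &
        forall s t, rho s t = \sum_(l < n) p l * tens (rhos l) s t].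

Definition block_positive k (B : op k) : Prop :=
  forall rho, separable rho -> 0 <= optr (opmul B rho).

Definition entanglement_witness k (W : op k) : Prop :=
  block_positive W /\ exists sigma, is_state sigma /\ optr (opmul W sigma) < 0.

Definition optimal_witness k (W : op k) : Prop :=
  entanglement_witness W /\
  exists rho, separable rho /\ optr (opmul W rho) = 0.

Definition unitary_invariant k (W : op k) : Prop :=
  forall U : 'M[C]_d, U \is unitarymx ->
    opmul (opmul (tens (fun _ => U)) W) (tens (fun _ => U ^t*)) = W.

Definition upd r (X : 'I_r -> 'M[C]_d) (i : 'I_r) (Y : 'M[C]_d) :=
  fun j => if j == i then Y else X j.

Definition multilinear r (f : ('I_r -> 'M[C]_d) -> 'M[C]_d) : Prop :=
  forall (X : 'I_r -> 'M[C]_d) (i : 'I_r) (a : C) (Y Z : 'M[C]_d),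
    f (upd X i (a *: Y + Z)) = a *: f (upd X i Y) + f (upd X i Z).

Definition unitary_equivariant r (f : ('I_r -> 'M[C]_d) -> 'M[C]_d) : Prop :=
  forall (U : 'M[C]_d) (X : 'I_r -> 'M[C]_d), U \is unitarymx ->
    f (fun i => U *m X i *m U ^t*) = U *m f X *m U ^t*.

Definition positive_map r (f : ('I_r -> 'M[C]_d) -> 'M[C]_d) : Prop :=
  forall X : 'I_r -> 'M[C]_d, (forall i, psd_mx (X i)) -> psd_mx (f X).

Definition smallest_eigenvalue_zero (A : 'M[C]_d) : Prop :=
  eigenvalue A 0 /\ forall a : C, eigenvalue A a -> 0 <= a.

Definition optimal_map r (f : ('I_r -> 'M[C]_d) -> 'M[C]_d) : Prop :=
  exists X : 'I_r -> 'M[C]_d,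
    (forall i, X i != 0 /\ psd_mx (X i)) /\ smallest_eigenvalue_zero (f X).

End QuantumDefs.

(* B is the Choi-type operator B(s, t) = f(E_{t_1 s_1}, ..., E_{t_r s_r})_{s_{r+1} t_{r+1}},
   E_{ab} the matrix units.  Expanding every argument of the multilinear map f in matrix
   units gives tr[B (Y_1 (x) ... (x) Y_{r+1})] = tr[f(Y_1, ..., Y_r) Y_{r+1}], which yields
   the partial-trace representation and reduces block positivity to tr[P Q] >= 0 for
   positive P, Q; unitary equivariance of f is unitary invariance of B.  By polarization
   every matrix is a combination of rank-one positive matrices, so a positive multilinear f
   commutes with the adjoint and B is Hermitian: if B is not positive, some vector state has
   negative expectation.  Finally, if v is a left null vector of f(X_1, ..., X_r) with
   X_i >= 0, then B vanishes on the normalized product state X_1 (x) ... (x) X_r (x) v^* v. *)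

From HB Require Import structures.
From mathcomp Require Import all_boot all_order all_algebra.
From mathcomp Require Import sesquilinear spectral reals complex.
From mathcomp Require Import ring.
Import GRing.Theory Num.Theory Order.TTheory.

Set Implicit Arguments.
Unset Strict Implicit.
Unset Printing Implicit Defensive.

Local Open Scope ring_scope.
Local Open Scope sesquilinear_scope.

Definition fupd (I J : finType) (w : {ffun I -> J}) (i : I) (a : J) : {ffun I -> J} :=
  [ffun j => if j == i then a else w j].

Lemma fupd_eq (I J : finType) (w : {ffun I -> J}) i a : fupd w i a i = a.
Proof. by rewrite ffunE eqxx. Qed.

Lemma fupd_id (I J : finType) (w : {ffun I -> J}) i : fupd w i (w i) = w.
Proof. by apply/ffunP => j; rewrite ffunE; case: eqP => [->|]. Qed.

Lemma fupd_fupd (I J : finType) (w : {ffun I -> J}) i a b :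
  fupd (fupd w i a) i b = fupd w i b.
Proof. by apply/ffunP => j; rewrite !ffunE; case: eqP. Qed.

Lemma sum_ffun_pair (I A B : finType) (V : nmodType) (F : {ffun I -> A * B} -> V) :
  \sum_w F w = \sum_(a : {ffun I -> A}) \sum_(b : {ffun I -> B}) F [ffun i => (a i, b i)].
Proof.
rewrite pair_big /=.
pose unzip (w : {ffun I -> A * B}) := ([ffun i => (w i).1], [ffun i => (w i).2]).
rewrite (reindex (fun p : {ffun I -> A} * {ffun I -> B} => [ffun i => (p.1 i, p.2 i)])) //=.
apply: onW_bij; exists unzip => [[a b]|w].
  by congr pair; apply/ffunP => i; rewrite !ffunE.
by apply/ffunP => i; rewrite !ffunE; case: (w i).
Qed.

Section MatrixEntries.
Variable C : numClosedFieldType.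

Lemma mulmx3E m n p q (A : 'M[C]_(m, n)) (X : 'M[C]_(n, p)) (B : 'M[C]_(p, q)) i j :
  (A *m X *m B) i j = \sum_a \sum_b A i a * X a b * B b j.
Proof.
rewrite mxE exchange_big; apply: eq_bigr => b _.
by rewrite mxE mulr_suml.
Qed.

Lemma mulmx_delta_mxE m n p q (A : 'M[C]_(m, n)) (B : 'M[C]_(p, q)) i j k l :
  (A *m delta_mx i j *m B) k l = A k i * B j l.
Proof.
rewrite mulmx3E (bigD1 i) //= [X in _ + X]big1 ?addr0 => [|a a_neq_i]; last first.
  by apply: big1 => b _; rewrite mxE (negbTE a_neq_i) mulr0 mul0r.
rewrite (bigD1 j) //= [X in _ + X]big1 ?addr0 => [|b b_neq_j]; last first.
  by rewrite mxE (negbTE b_neq_j) andbF mulr0 mul0r.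
by rewrite mxE !eqxx mulr1.
Qed.

Lemma adj_delta_mx m n (i : 'I_m) (j : 'I_n) : (delta_mx i j : 'M[C]_(m, n))^t* = delta_mx j i.
Proof. by apply/matrixP => p q; rewrite !mxE conjC_nat andbC. Qed.

Lemma adjmx_sum_scale m n (I : finType) (a : I -> C) (M : I -> 'M[C]_(m, n)) :
  (\sum_k a k *: M k)^t* = \sum_k (a k)^* *: (M k)^t*.
Proof.
by rewrite linear_sum raddf_sum; apply: eq_bigr => k _; rewrite linearZ /= map_mxZ.
Qed.

End MatrixEntries.

Section MultilinearExpansion.
Variables (R : realType) (d r : nat).
Local Notation C := R[i].
Variable f : ('I_r -> 'M[C]_d) -> 'M[C]_d.
Hypothesis f_ml : multilinear f.

Lemma multilinear_upd0 X i : f (upd X i 0) = 0.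
Proof.
have := f_ml X i 1 0 0; rewrite !scale1r addr0.
by move/(congr1 (fun Z => Z - f (upd X i 0))); rewrite subrr addrK.
Qed.

Lemma multilinear_upd_sum X i (I : Type) (s : seq I) (P : pred I) (c : I -> C)
    (Y : I -> 'M[C]_d) :
  f (upd X i (\sum_(k <- s | P k) c k *: Y k)) =
  \sum_(k <- s | P k) c k *: f (upd X i (Y k)).
Proof.
apply: (big_rec2 (fun Z fZ => f (upd X i Z) = fZ)) => [|k Z fZ _ <-].
  exact: multilinear_upd0.
exact: f_ml.
Qed.

Variables (K : finType) (c : 'I_r -> K -> C) (Y : 'I_r -> K -> 'M[C]_d).

Section Prefix.
Variable k0 : K.

(* Pinning the coordinates i >= n of w to k0 makes each term of a partial expansion
   appear exactly once. *)
Definition vanish_from n (w : {ffun 'I_r -> K}) :=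
  [forall i : 'I_r, (n <= i)%N ==> (w i == k0)].

Lemma sum_vanish_from_succ n (i0 : 'I_r) (F : {ffun 'I_r -> K} -> 'M[C]_d) :
  i0 = n :> nat ->
  \sum_(w | vanish_from n w) \sum_k F (fupd w i0 k) = \sum_(w | vanish_from n.+1 w) F w.
Proof.
move=> i0n; rewrite pair_big_dep /=.
rewrite (reindex (fun w => (fupd w i0 k0, w i0))) /=; last first.
  exists (fun p => fupd p.1 i0 p.2) => [w _ /=|[w k]]; first by rewrite fupd_fupd fupd_id.
  rewrite inE /= andbT => /forallP /(_ i0); rewrite i0n leqnn /= => /eqP wi0.
  by rewrite fupd_fupd fupd_eq -wi0 fupd_id.
apply: eq_big => [w|w _]; last by rewrite fupd_fupd fupd_id.
rewrite andbT; apply/forallP/forallP => vw i.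
  apply/implyP => lt_ni; have := implyP (vw i) (ltnW lt_ni); rewrite ffunE.
  by case: (eqVneq i i0) => [ei|] //; move: lt_ni; rewrite ei i0n ltnn.
rewrite ffunE; case: (eqVneq i i0) => [_|ne]; first by rewrite eqxx implybT.
apply/implyP => le_ni; apply: (implyP (vw i)); rewrite ltn_neqAle le_ni andbT.
by apply: contra_neq ne => ni; apply: val_inj; rewrite /= -ni i0n.
Qed.

Lemma multilinear_expand_prefix n : (n <= r)%N -> forall Z : 'I_r -> 'M[C]_d,
  f (fun i => if (i < n)%N then \sum_k c i k *: Y i k else Z i) =
  \sum_(w | vanish_from n w)
    (\prod_(i : 'I_r | (i < n)%N) c i (w i)) *:
    f (fun i => if (i < n)%N then Y i (w i) else Z i).
Proof.
elim: n => [_ Z|n IHn lt_nr Z].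
  rewrite (big_pred1 [ffun=> k0]) => [|w]; last first.
    apply/forallP/eqP => [vw|-> i /=]; last by rewrite ffunE eqxx.
    by apply/ffunP => i; rewrite ffunE; apply/eqP/(implyP (vw i)).
  by rewrite big_pred0 // scale1r.
pose i0 : 'I_r := Ordinal lt_nr.
have ltnS_i0 (i : 'I_r) : (i < n.+1)%N = (i == i0) || (i < n)%N.
  by rewrite ltnS leq_eqVlt.
have ltn_i0 : (i0 < n)%N = false by rewrite ltnn.
set S := \sum_k c i0 k *: Y i0 k.
have -> : (fun i : 'I_r => if (i < n.+1)%N then \sum_k c i k *: Y i k else Z i) =
    (fun i => if (i < n)%N then \sum_k c i k *: Y i k else upd Z i0 S i).
  apply: boolp.funext => i; rewrite /upd ltnS_i0.
  by case: (eqVneq i i0) => [->|]; rewrite ?ltn_i0.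
rewrite IHn ?(ltnW lt_nr) // -(sum_vanish_from_succ _ (i0 := i0)) //.
apply: eq_bigr => w vw.
set g := fun i : 'I_r => if (i < n)%N then Y i (w i) else Z i.
have -> : (fun i : 'I_r => if (i < n)%N then Y i (w i) else upd Z i0 S i) = upd g i0 S.
  by apply: boolp.funext => i; rewrite /upd /g; case: (eqVneq i i0) => [->|]; rewrite ?ltn_i0.
rewrite multilinear_upd_sum scaler_sumr; apply: eq_bigr => k _; rewrite scalerA.
congr (_ *: f _).
  rewrite [RHS](bigD1 i0) //= fupd_eq [RHS]mulrC; congr (_ * _).
  apply: eq_big => i; rewrite ?ltnS_i0; case: (eqVneq i i0) => [->|ne] //=.
  - by rewrite andbT.
  - by rewrite ltnn.
  - by rewrite ffunE (negbTE ne).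
apply: boolp.funext => i; rewrite /upd /g ltnS_i0 ffunE.
by case: (eqVneq i i0) => [->|]; rewrite ?ltn_i0.
Qed.

End Prefix.

Lemma multilinear_expand (k0 : K) :
  f (fun i => \sum_k c i k *: Y i k) =
  \sum_(w : {ffun 'I_r -> K}) (\prod_i c i (w i)) *: f (fun i => Y i (w i)).
Proof.
have all_ltr (A B : 'I_r -> 'M[C]_d) : (fun i : 'I_r => if (i < r)%N then A i else B i) = A.
  by apply: boolp.funext => i; rewrite ltn_ord.
rewrite -[LHS](congr1 f (all_ltr _ (fun=> 0))) (multilinear_expand_prefix k0 (leqnn r)).
apply: eq_big => [w|w _]; first by apply/forallP => i; rewrite leqNgt ltn_ord.
by rewrite all_ltr; congr (_ *: _); apply: eq_bigl => i; rewrite ltn_ord.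
Qed.

End MultilinearExpansion.

Section MatrixUnitExpansion.
Variables (R : realType) (d r : nat).
Local Notation C := R[i].
Variable f : ('I_r -> 'M[C]_d) -> 'M[C]_d.
Hypothesis f_ml : multilinear f.

Lemma multilinear_delta_expand X :
  f X = \sum_(s : tidx d r) \sum_(u : tidx d r)
          (\prod_i X i (s i) (u i)) *: f (fun i => delta_mx (s i) (u i)).
Proof.
have [d0|d_gt0] := posnP d.
  by apply/matrixP => -[a lt_ad]; exfalso; rewrite d0 in lt_ad.
pose j0 := Ordinal d_gt0.
have XE : X = fun i => \sum_(p : 'I_d * 'I_d) X i p.1 p.2 *: delta_mx p.1 p.2.
  by apply: boolp.funext => i; rewrite {1}(matrix_sum_delta (X i)) pair_bigA.
rewrite {1}XE (multilinear_expand f_ml _ _ (j0, j0)) sum_ffun_pair.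
apply: eq_bigr => s _; apply: eq_bigr => u _.
by congr (_ *: f _); [apply: eq_bigr => i _ | apply: boolp.funext => i]; rewrite ffunE.
Qed.

Lemma multilinear_scale (a : 'I_r -> C) X :
  f (fun i => a i *: X i) = (\prod_i a i) *: f X.
Proof.
rewrite multilinear_delta_expand [in RHS]multilinear_delta_expand !scaler_sumr.
apply: eq_bigr => s _; rewrite scaler_sumr; apply: eq_bigr => u _.
by rewrite scalerA -big_split; congr (_ *: _); apply: eq_bigr => i _; rewrite mxE.
Qed.

End MatrixUnitExpansion.

Section PsdForms.
Variable C : numClosedFieldType.

Definition psd_form (I : finType) (A : I -> I -> C) : Prop :=
  (forall s t, A t s = (A s t)^*) /\
  (forall v : I -> C, 0 <= \sum_s \sum_t (v s)^* * A s t * v t).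

Lemma psd_form_eq (I : finType) (A B : I -> I -> C) :
  A =2 B -> psd_form A -> psd_form B.
Proof.
by move=> AB; have -> : A = B by apply: boolp.funext => s; apply: boolp.funext.
Qed.

Lemma psd_form_rank1 (I : finType) (x : I -> C) : psd_form (fun s t => x s * (x t)^*).
Proof.
split=> [s t|v]; first by rewrite rmorphM /= conjCK mulrC.
pose y := \sum_t (x t)^* * v t.
have -> : \sum_s \sum_t (v s)^* * (x s * (x t)^*) * v t = y^* * y.
  rewrite rmorph_sum mulr_suml; apply: eq_bigr => s _.
  rewrite mulr_sumr; apply: eq_bigr => t _; rewrite rmorphM /= conjCK; ring.
by rewrite mulrC mul_conjC_ge0.
Qed.

Lemma psd_form_scale (I : finType) (a : C) (A : I -> I -> C) :
  0 <= a -> psd_form A -> psd_form (fun s t => a * A s t).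
Proof.
move=> a_ge0 [A_herm A_ge0]; have a_real : a^* = a by apply/CrealP/ger0_real.
split=> [s t|v]; first by rewrite rmorphM /= a_real A_herm.
rewrite (eq_bigr (fun s => a * \sum_t (v s)^* * A s t * v t)); last first.
  by move=> s _; rewrite mulr_sumr; apply: eq_bigr => t _; ring.
by rewrite -mulr_sumr mulr_ge0.
Qed.

Lemma not_psd_form_neg (I : finType) (A : I -> I -> C) :
  (forall s t, A t s = (A s t)^*) -> ~ psd_form A ->
  exists v : I -> C, \sum_s \sum_t (v s)^* * A s t * v t < 0.
Proof.
move=> A_herm not_psd; apply: boolp.contrapT => no_neg; apply: not_psd.
split=> // v; set q := \sum_s _.
have q_real : q \is Num.real.
  apply/CrealP; rewrite /q rmorph_sum exchange_big; apply: eq_bigr => t _.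
  rewrite rmorph_sum; apply: eq_bigr => s _; rewrite !rmorphM /= conjCK -A_herm; ring.
by rewrite real_leNgt ?real0 //; apply/negP => q_lt0; apply: no_neg; exists v.
Qed.

Lemma sum_mul_conjC_gt0 (I : finType) (x : I -> C) i :
  x i != 0 -> 0 < \sum_j x j * (x j)^*.
Proof.
move=> xi_neq0; rewrite lt_def sumr_ge0 ?andbT => [|j _]; last exact: mul_conjC_ge0.
apply: contraNneq xi_neq0 => /(psumr_eq0P (fun j _ => mul_conjC_ge0 (x j))) /(_ i isT).
by move/eqP; rewrite mul_conjC_eq0.
Qed.

End PsdForms.

Section PsdMatrices.
Variables (R : realType) (d : nat).
Local Notation C := R[i].

Lemma psd_mx_scale (a : C) (X : 'M[C]_d) : 0 <= a -> psd_mx X -> psd_mx (a *: X).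
Proof.
move=> a_ge0 /(psd_form_scale a_ge0).
by apply: psd_form_eq => i j; rewrite mxE.
Qed.

Lemma psd_mx_rank1 (u : 'rV[C]_d) : psd_mx (u^t* *m u).
Proof.
apply: (@psd_form_eq _ _ _ (fun i j => (u^t* *m u) i j)) (psd_form_rank1 (fun i => (u 0 i)^*)).
by move=> i j; rewrite mxE big_ord1 !mxE conjCK.
Qed.

Lemma psd_mx_adj (X : 'M[C]_d) : psd_mx X -> X^t* = X.
Proof. by move=> [X_herm _]; apply/matrixP => i j; rewrite !mxE X_herm conjCK. Qed.


Lemma psd_mx_conj_diag_ge0 m (X : 'M[C]_d) (M : 'M[C]_(m, d)) k :
  psd_mx X -> 0 <= (M *m X *m M^t*) k k.
Proof.
move=> [_ X_form]; rewrite mulmx3E.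
under eq_bigr do under eq_bigr do rewrite -[M k _]conjCK !mxE.
exact: X_form.
Qed.

Lemma psd_mx_spectral (X : 'M[C]_d) : psd_mx X ->
  exists (P : 'M[C]_d) (D : 'rV[C]_d),
    [/\ P \is unitarymx, X = P^t* *m diag_mx D *m P & forall k, 0 <= D 0 k].
Proof.
move=> X_psd; have X_normal : X \is normalmx by apply/normalmxP; rewrite psd_mx_adj.
set P := spectralmx X; set D := spectral_diag X.
have P_unitary : P \is unitarymx := spectral_unitarymx X.
have X_eq : X = P^t* *m diag_mx D *m P.
  by move/orthomx_spectralP: X_normal; rewrite invmx_unitary.
exists P, D; split=> // k; have := psd_mx_conj_diag_ge0 P k X_psd.
by rewrite X_eq !mulmxA (unitarymxP P_unitary) mul1mx mulmxtVK // mxE eqxx mulr1n.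
Qed.

Lemma mxtrace_psd_mul_ge0 (X Y : 'M[C]_d) : psd_mx X -> psd_mx Y -> 0 <= \tr (X *m Y).
Proof.
move=> X_psd /psd_mx_spectral [P [D [_ -> D_ge0]]].
rewrite !mulmxA mxtrace_mulC !mulmxA mul_mx_diag /mxtrace.
apply: sumr_ge0 => k _; rewrite mxE mulr_ge0 //.
exact: psd_mx_conj_diag_ge0.
Qed.

Lemma mxtrace_psd_gt0 (X : 'M[C]_d) : psd_mx X -> X != 0 -> 0 < \tr X.
Proof.
move=> /psd_mx_spectral [P [D [P_unitary X_eq D_ge0]]] X_neq0.
have trX : \tr X = \sum_k D 0 k.
  by rewrite X_eq mxtrace_mulC mulmxA (unitarymxP P_unitary) mul1mx mxtrace_diag.
rewrite trX lt_def sumr_ge0 // andbT; apply: contra_neq X_neq0 => /psumr_eq0P D0.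
rewrite X_eq (_ : diag_mx D = 0) ?mulmx0 ?mul0mx //.
by apply/matrixP => i j; rewrite !mxE D0 ?mul0rn.
Qed.

Lemma is_state_mx_normalize (X : 'M[C]_d) :
  psd_mx X -> 0 < \tr X -> is_state_mx ((\tr X)^-1 *: X).
Proof.
move=> X_psd trX_gt0; split; first by apply: psd_mx_scale; rewrite // invr_ge0 ltW.
by rewrite mxtraceZ mulVf ?lt0r_neq0.
Qed.

End PsdMatrices.

Section Polarization.
Variables (R : realType) (d : nat).
Local Notation C := R[i].


Definition polar_vec (k : 'I_d * 'I_d * 'I_4) : 'rV[C]_d :=
  \row_p ((p == k.1.1)%:R + 'i ^+ k.2 * (p == k.1.2)%:R).

Lemma mx_polar_expand (X : 'M[C]_d) :
  X = \sum_(k : 'I_d * 'I_d * 'I_4)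
        (X k.1.1 k.1.2 * ('i ^+ k.2)^* / 4) *: ((polar_vec k)^t* *m polar_vec k).
Proof.
rewrite {1}(matrix_sum_delta X) pair_bigA -(pair_bigA _ (fun (ab : 'I_d * 'I_d) (m : 'I_4) =>
  (X ab.1 ab.2 * ('i ^+ m)^* / 4) *: ((polar_vec (ab, m))^t* *m polar_vec (ab, m)))) /=.
apply: eq_bigr => -[a b] _ /=; under eq_bigr do rewrite -mulrA -scalerA.
rewrite -scaler_sumr; congr (_ *: _).
apply/matrixP => p q.
rewrite summxE !big_ord_recr big_ord0 /= !mxE !big_ord1 !mxE /=.
rewrite !rmorphD !rmorphM /= !conjC_nat !rmorphXn /= conjCi -mulnb natrM.
have i2 := sqrCi C; have four_neq0 : (4 : C) != 0 by rewrite pnatr_eq0.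
by field: i2.
Qed.

End Polarization.

Section PositiveMultilinear.
Variables (R : realType) (d r : nat).
Local Notation C := R[i].
Variable f : ('I_r -> 'M[C]_d) -> 'M[C]_d.
Hypotheses (f_ml : multilinear f) (f_pos : positive_map f).

Lemma positive_multilinear_adj X : f (fun i => (X i)^t*) = (f X)^t*.
Proof.
(* Expand every argument along the rank-one positive matrices of [mx_polar_expand]:
   f maps every tuple of those to a positive, hence self-adjoint, matrix. *)
have [d0|d_gt0] := posnP d.
  by apply/matrixP => -[a lt_ad]; exfalso; rewrite d0 in lt_ad.
pose P (k : 'I_d * 'I_d * 'I_4) := (polar_vec R k)^t* *m polar_vec R k.
pose c i (k : 'I_d * 'I_d * 'I_4) := X i k.1.1 k.1.2 * ('i ^+ k.2)^* / 4.
have P_psd k : psd_mx (P k) by exact: psd_mx_rank1.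
have -> : (fun i => (X i)^t*) = fun i => \sum_k (c i k)^* *: P k.
  apply: boolp.funext => i; rewrite {1}(mx_polar_expand (X i)) adjmx_sum_scale.
  by apply: eq_bigr => k _; rewrite (psd_mx_adj (P_psd k)).
rewrite [in RHS](_ : X = fun i => \sum_k c i k *: P k); last first.
  by apply: boolp.funext => i; exact: mx_polar_expand.
pose k0 := (Ordinal d_gt0, Ordinal d_gt0, 0 : 'I_4).
rewrite !(multilinear_expand f_ml _ _ k0) adjmx_sum_scale; apply: eq_bigr => w _.
by rewrite rmorph_prod psd_mx_adj //; apply: f_pos => i; exact: P_psd.
Qed.

End PositiveMultilinear.

Section States.
Variables (R : realType) (d k : nat).
Local Notation C := R[i].

Lemma optr_opmul_mix n (W rho : op R d k) (p : 'I_n -> C) (sigma : 'I_n -> op R d k) :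
  (forall s t, rho s t = \sum_l p l * sigma l s t) ->
  optr (opmul W rho) = \sum_l p l * optr (opmul W (sigma l)).
Proof.
move=> rho_eq; rewrite /optr /opmul.
transitivity (\sum_s \sum_u \sum_l p l * (W s u * sigma l u s)).
  apply: eq_bigr => s _; apply: eq_bigr => u _.
  by rewrite rho_eq mulr_sumr; apply: eq_bigr => l _; ring.
under eq_bigr do rewrite exchange_big.
rewrite exchange_big; apply: eq_bigr => l _; rewrite mulr_sumr.
by apply: eq_bigr => s _; rewrite mulr_sumr.
Qed.

Lemma separable_tens (Y : 'I_k -> 'M[C]_d) :
  (forall i, is_state_mx (Y i)) -> separable (tens Y).
Proof.
move=> Y_state; exists 1%N, (fun=> 1), (fun=> Y).
by split=> [_|||s t]; rewrite ?big_ord1 ?mul1r ?ler01.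
Qed.

Lemma hermitian_not_psd_neg_state (W : op R d k) :
  (forall s t, W t s = (W s t)^*) -> ~ psd_op W ->
  exists sigma, is_state sigma /\ optr (opmul W sigma) < 0.
Proof.
move=> W_herm /(not_psd_form_neg W_herm) [v form_lt0].
have [s vs_neq0] : exists s, v s != 0.
  case: (pickP (fun s => v s != 0)) => [s vs|v0]; first by exists s.
  move: form_lt0; rewrite big1 ?ltxx // => s _; apply: big1 => t _.
  by rewrite (eqP (negbFE (v0 t))) mulr0.
have N_gt0 := sum_mul_conjC_gt0 vs_neq0; set N := \sum_j _ in N_gt0.
exists (fun u s => N^-1 * (v u * (v s)^*)); split; first split.
- by apply: psd_form_scale; [rewrite invr_ge0 ltW | exact: psd_form_rank1].
- by rewrite /optr -mulr_sumr mulVf ?lt0r_neq0.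
- rewrite /optr /opmul (_ : \sum_s _ = N^-1 * \sum_s \sum_t (v s)^* * W s t * v t).
    by rewrite pmulr_rlt0 ?invr_gt0.
  rewrite mulr_sumr; apply: eq_bigr => s' _.
  by rewrite mulr_sumr; apply: eq_bigr => t _; ring.
Qed.

End States.

Section TensorIndices.
Variables (R : realType) (d r : nat).
Local Notation C := R[i].

Definition tsnoc (s : tidx d r) (a : 'I_d) : tidx d r.+1 :=
  [ffun i => if unlift ord_max i is Some j then s j else a].

Lemma tsnoc_lift s a j : tsnoc s a (lift ord_max j) = s j.
Proof. by rewrite ffunE liftK. Qed.

Lemma tsnoc_last s a : tsnoc s a ord_max = a.
Proof. by rewrite ffunE unlift_none. Qed.

Lemma sum_tidxS (V : nmodType) (F : tidx d r.+1 -> V) :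
  \sum_s F s = \sum_(a : 'I_d) \sum_(s : tidx d r) F (tsnoc s a).
Proof.
rewrite exchange_big pair_big /= (reindex (fun p : tidx d r * 'I_d => tsnoc p.1 p.2)) //.
apply: onW_bij; exists (fun s : tidx d r.+1 => ([ffun j => s (lift ord_max j)], s ord_max)).
  move=> [s a]; rewrite tsnoc_last; congr pair.
  by apply/ffunP => j; rewrite ffunE tsnoc_lift.
by move=> s; apply/ffunP => i; rewrite ffunE; case: unliftP => [j|] ->; rewrite ?ffunE.
Qed.

Lemma sum_tidxS_last (V : nmodType) (F : tidx d r.+1 -> V) a :
  \sum_(s : tidx d r.+1 | s ord_max == a) F s = \sum_(s : tidx d r) F (tsnoc s a).
Proof.
rewrite big_mkcond sum_tidxS (bigD1 a) //= [X in _ + X]big1 ?addr0 => [|b b_neq_a].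
  by apply: eq_bigr => s _; rewrite tsnoc_last eqxx.
by apply: big1 => s _; rewrite tsnoc_last (negbTE b_neq_a).
Qed.

Lemma tensS (Y : 'I_r.+1 -> 'M[C]_d) s t :
  tens Y s t = (\prod_j Y (lift ord_max j) (s (lift ord_max j)) (t (lift ord_max j)))
               * Y ord_max (s ord_max) (t ord_max).
Proof.
rewrite /tens big_ord_recr /=; congr (_ * _); apply: eq_bigr => j _.
suff -> : widen_ord (leqnSn r) j = lift ord_max j by [].
by apply: val_inj; rewrite /= /bump leqNgt ltn_ord.
Qed.

Lemma tens_tsnoc (Y : 'I_r.+1 -> 'M[C]_d) s a u b :
  tens Y (tsnoc s a) (tsnoc u b) =
  (\prod_j Y (lift ord_max j) (s j) (u j)) * Y ord_max a b.
Proof. by rewrite tensS !tsnoc_last; under eq_bigr do rewrite !tsnoc_lift. Qed.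

End TensorIndices.

Section ChoiOperator.
Variables (R : realType) (d r : nat).
Local Notation C := R[i].
Variable f : ('I_r -> 'M[C]_d) -> 'M[C]_d.
Hypothesis f_ml : multilinear f.

Definition choi : op R d r.+1 := fun s t =>
  f (fun j => delta_mx (t (lift ord_max j)) (s (lift ord_max j))) (s ord_max) (t ord_max).

Lemma choi_tsnoc s a u b : choi (tsnoc s a) (tsnoc u b) = f (fun j => delta_mx (u j) (s j)) a b.
Proof.
rewrite /choi !tsnoc_last; congr (f _ _ _).
by apply: boolp.funext => j; rewrite !tsnoc_lift.
Qed.

Lemma choi_entry (X : 'I_r -> 'M[C]_d) a b :
  \sum_(s : tidx d r) \sum_(u : tidx d r)
    (\prod_j X j (u j) (s j)) * choi (tsnoc s a) (tsnoc u b) = f X a b.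
Proof.
rewrite (multilinear_delta_expand f_ml X) summxE exchange_big; apply: eq_bigr => u _.
by rewrite summxE; apply: eq_bigr => s _; rewrite choi_tsnoc mxE.
Qed.

Lemma optr_choi_tens (Y : 'I_r.+1 -> 'M[C]_d) :
  optr (opmul choi (tens Y)) = \tr (f (fun j => Y (lift ord_max j)) *m Y ord_max).
Proof.
rewrite /optr /opmul sum_tidxS; apply: eq_bigr => a _; rewrite mxE.
under eq_bigr do rewrite sum_tidxS.
rewrite exchange_big; apply: eq_bigr => b _.
rewrite -choi_entry mulr_suml; apply: eq_bigr => s _; rewrite mulr_suml; apply: eq_bigr => u _.
by rewrite tens_tsnoc; ring.
Qed.

Lemma ptrace_choi_tens (X : 'I_r -> 'M[C]_d) : ptrace (opmul choi (tens (ext_one X))) = f X.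
Proof.
apply/matrixP => a b; rewrite mxE sum_tidxS_last -choi_entry; apply: eq_bigr => s _.
have -> : [ffun i => if i == ord_max then b else tsnoc s a i] = tsnoc s b.
  apply/ffunP => i; rewrite ffunE; case: (unliftP ord_max i) => [j|] ->.
    by rewrite eq_sym (negbTE (neq_lift _ _)) !tsnoc_lift.
  by rewrite eqxx tsnoc_last.
rewrite /opmul sum_tidxS (bigD1 b) //= [X in _ + X]big1 ?addr0 => [|b' b'_neq_b]; last first.
  apply: big1 => u _; rewrite tens_tsnoc /ext_one unlift_none mxE (negbTE b'_neq_b).
  by rewrite mulr0 mulr0.
apply: eq_bigr => u _; rewrite tens_tsnoc /ext_one unlift_none mxE eqxx mulr1 mulrC.
by congr (_ * _); apply: eq_bigr => j _; rewrite liftK.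
Qed.

Lemma choi_conj (P Q : 'M[C]_d) s t :
  opmul (opmul (tens (fun=> P)) choi) (tens (fun=> Q)) s t =
  (P *m f (fun j => Q *m delta_mx (t (lift ord_max j)) (s (lift ord_max j)) *m P) *m Q)
    (s ord_max) (t ord_max).
Proof.
rewrite mulmx3E /opmul; under eq_bigr do rewrite mulr_suml.
rewrite exchange_big sum_tidxS; apply: eq_bigr => a _.
under eq_bigr do rewrite sum_tidxS.
rewrite exchange_big; apply: eq_bigr => b _.
rewrite -choi_entry mulr_sumr mulr_suml; apply: eq_bigr => u _.
rewrite mulr_sumr mulr_suml; apply: eq_bigr => v _.
rewrite !tensS !tsnoc_last.
under [in RHS]eq_bigr do rewrite mulmx_delta_mxE.
under eq_bigr do rewrite tsnoc_lift.
rewrite [X in _ * (X * _)](eq_bigr (fun j => Q (v j) (t (lift ord_max j)))); last first.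
  by move=> j _; rewrite tsnoc_lift.
rewrite big_split /=; ring.
Qed.

Lemma choi_unitary_invariant : unitary_equivariant f -> unitary_invariant choi.
Proof.
move=> f_eq U U_unitary; apply: boolp.funext => s; apply: boolp.funext => t.
have Ut_unitary : U^t* \is unitarymx by rewrite trmxC_unitary.
have := f_eq _ (fun j => delta_mx (t (lift ord_max j)) (s (lift ord_max j))) Ut_unitary.
rewrite trmxCK choi_conj => ->.
by rewrite !mulmxA (unitarymxP U_unitary) mul1mx mulmxtVK.
Qed.

Lemma choi_adj : positive_map f -> forall s t, choi t s = (choi s t)^*.
Proof.
move=> f_pos s t.
have := positive_multilinear_adj f_ml f_pos
  (fun j => delta_mx (t (lift ord_max j)) (s (lift ord_max j))).
move/matrixP/(_ (t ord_max) (s ord_max)); rewrite !mxE => <-.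
by rewrite /choi; congr (f _ _ _); apply: boolp.funext => j; rewrite adj_delta_mx.
Qed.

Lemma choi_block_positive : positive_map f -> block_positive choi.
Proof.
move=> f_pos rho [n [p [rhos [p_ge0 _ rhos_state rho_eq]]]].
rewrite (optr_opmul_mix _ rho_eq); apply: sumr_ge0 => l _; rewrite mulr_ge0 //.
rewrite optr_choi_tens mxtrace_psd_mul_ge0 //; last exact: (rhos_state l _).1.
by apply: f_pos => j; exact: (rhos_state l _).1.
Qed.

Lemma choi_optimal_zero : positive_map f -> optimal_map f ->
  exists rho, separable rho /\ optr (opmul choi rho) = 0.
Proof.
move=> f_pos [X [X_psd [/eigenvalueP [u uX0 u_neq0] _]]]; rewrite scale0r in uX0.
have trX_gt0 j : 0 < \tr (X j) by apply: mxtrace_psd_gt0; case: (X_psd j).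
have [p up_neq0] : exists p, u 0 p != 0.
  case: (pickP (fun p => u 0 p != 0)) => [p up|u0]; first by exists p.
  by case/eqP: u_neq0; apply/rowP => p; rewrite mxE; apply/eqP/negbFE/u0.
have tru_gt0 : 0 < \tr (u^t* *m u).
  rewrite (_ : \tr _ = \sum_q u 0 q * (u 0 q)^*); first exact: sum_mul_conjC_gt0 up_neq0.
  by apply: eq_bigr => q _; rewrite mxE big_ord1 !mxE mulrC.
pose rhos i := if unlift ord_max i is Some j then (\tr (X j))^-1 *: X j
               else (\tr (u^t* *m u))^-1 *: (u^t* *m u).
exists (tens rhos); split.
  apply: separable_tens => i; rewrite /rhos; case: (unlift ord_max i) => [j|].
    by apply: is_state_mx_normalize => //; case: (X_psd j).
  exact: is_state_mx_normalize (psd_mx_rank1 u) tru_gt0.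
rewrite optr_choi_tens /rhos unlift_none.
under boolp.eq_fun do rewrite liftK.
rewrite multilinear_scale // -scalemxAl -scalemxAr !mxtraceZ mulmxA.
by rewrite [\tr (f X *m _ *m _)]mxtrace_mulC mulmxA uX0 mul0mx mxtrace0 !mulr0.
Qed.

End ChoiOperator.

Theorem corollary2 (R : realType) (d r : nat) (hd : (0 < d)%N) (hr : (0 < r)%N)
  (f : ('I_r -> 'M[R[i]]_d) -> 'M[R[i]]_d) :
  multilinear f -> unitary_equivariant f -> positive_map f ->
  exists B : op R d r.+1,
    [/\ block_positive B,
        unitary_invariant B,
        (forall X : 'I_r -> 'M[R[i]]_d, f X = ptrace (opmul B (tens (ext_one X)))) &
        (optimal_map f -> ~ psd_op B -> optimal_witness B /\ unitary_invariant B)].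
Proof.
move=> f_ml f_eq f_pos; exists (choi f).
have choi_bp := choi_block_positive f_ml f_pos.
have choi_inv := choi_unitary_invariant f_ml f_eq.
split=> // [X|f_opt choi_not_psd]; first by rewrite ptrace_choi_tens.
split=> //; split; first split=> //.
  exact: hermitian_not_psd_neg_state (choi_adj f_ml f_pos) choi_not_psd.
exact: choi_optimal_zero.
Qed.
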